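(* Let $k\ge3$, $r\ge0$ and $n=3^k-1+2r$. Let $M$ be the closed surface carrying the polyhedral map $D_{\{2k,2k\}}(n)$. Then $M$ is orientable if $r$ is even and non-orientable if $r$ is odd.
   Context: Vertex set $\mathbb{Z}_n$; integers are read modulo $n$. Define $w_0=0$. Then successively subtract $3^{k-1}+r$ twice, then $3^{k-2}$ twice, $3^{k-3}$ twice, ..., and finally $3$ twice. This gives vertices $w_1,\dots,w_{2k-2}$, and one checks $w_{2k-2}\equiv 2\pmod n$. Let $P$ be the $2k$-gon with cyclically ordered boundary vertices $(0,w_1,\dots,w_{2k-3},2,1)$. The map $D_{\{2k,2k\}}(n)$ is the 2-dimensional cell complex whose 2-cells are the $n$ translates $P+i$, $i\in\mathbb{Z}_n$. It is a known standing fact (Datta) that this is a $\{2k,2k\}$-equivelar polyhedral map on a closed surface $M$: every 2-cell is a $2k$-gon, every vertex has degree $2k$, and any two 2-cells meet in the empty set, a common vertex, or a common edge. *)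

From mathcomp Require Import all_boot.
Set Implicit Arguments. Unset Strict Implicit. Unset Printing Implicit Defensive.

(* Vertices of D_{2k,2k}(n) are Z_n, represented by naturals 0 <= x < n. *)

Definition Dn (k r : nat) : nat := 3 ^ k - 1 + 2 * r.

Definition Dsteps (k r : nat) : seq nat :=
  (3 ^ k.-1 + r) :: (3 ^ k.-1 + r) ::
  flatten [seq [:: 3 ^ (k - j); 3 ^ (k - j)] | j <- iota 2 (k - 2)].

Definition Dw (k r j : nat) : nat :=
  let n := Dn k r in (n - (sumn (take j (Dsteps k r))) %% n) %% n.

Definition Dbase (k r : nat) : seq nat :=
  [:: 0] ++ [seq Dw k r j | j <- iota 1 (2 * k - 3)] ++ [:: 2 %% Dn k r; 1 %% Dn k r].

Definition Dface (k r i : nat) : seq nat :=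
  [seq (x + i) %% Dn k r | x <- Dbase k r].

Definition dedges (s : seq nat) : seq (nat * nat) := zip s (rot 1 s).

Definition oface (s : seq nat) (b : bool) : seq nat := if b then s else rev s.

(* Combinatorial orientability of a polyhedral map on a closed surface given by
   its list of faces: there is a choice of orientation of each face such that
   two distinct faces never traverse a common edge in the same direction
   (i.e. every edge is traversed in opposite directions by its two faces). *)
Definition orientable_faces (faces : seq (seq nat)) : Prop :=
  exists e : nat -> bool,
    forall i j, i < size faces -> j < size faces -> i != j ->
      ~~ has (fun d => d \in dedges (oface (nth [::] faces j) (e j)))
             (dedges (oface (nth [::] faces i) (e i))).

Definition Dfaces (k r : nat) : seq (seq nat) :=
  [seq Dface k r i | i <- iota 0 (Dn k r)].

Definition D_orientable (k r : nat) : Prop := orientable_faces (Dfaces k r).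

From mathcomp Require Import all_boot zify.

Set Implicit Arguments.
Unset Strict Implicit.
Unset Printing Implicit Defensive.

(* Every face P + i is the closed walk from i that subtracts the steps
   a, a, 3^(k-2), 3^(k-2), ..., 3, 3, 1, 1 in Z_n, where a = 3^(k-1) + r;
   these steps add up to n.
   If r is even, all steps are odd, so n is even and the parity of the position
   of an edge along the walk is fixed by the parities of the face and of the
   first endpoint, while the two endpoints fix the step.  Orient P + i by the
   parity of i: two such faces traversing an edge the same way would see it at
   the same position, hence coincide, and two faces traversing it in opposite
   ways would need two steps adding up to 0 in Z_n.
   If r is odd, P + i and P + i + 1 traverse the edge (i + 2, i + 1) in the
   same direction, so their orientations must alternate; but P and P + a,
   with a even, traverse the edge (0, -a) in the same direction. *)

Lemma nth_rot1 (s : seq nat) m : m < size s ->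
  nth 0 (rot 1 s) m = nth 0 s (m.+1 %% size s).
Proof.
case: s => [//|x t] /= lt_m; rewrite rot1_cons nth_rcons.
case: (ltnP m (size t)) => [lt_mt | le_tm]; first by rewrite modn_small.
have -> : m = size t by lia.
by rewrite eqxx modnn.
Qed.

Lemma mem_dedges (s : seq nat) x y :
  reflect (exists2 m, m < size s & nth 0 s m = x /\ nth 0 s (m.+1 %% size s) = y)
          ((x, y) \in dedges s).
Proof.
rewrite /dedges; apply: (iffP (nthP (0, 0))); rewrite size_zip size_rot minnn.
  by case=> m lt_m; rewrite nth_zip ?size_rot // nth_rot1 // => -[<- <-]; exists m.
by case=> m lt_m [<- <-]; exists m; rewrite // nth_zip ?size_rot // nth_rot1.
Qed.

Lemma mem_dedges_rev (s : seq nat) x y :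
  (x, y) \in dedges s -> (y, x) \in dedges (rev s).
Proof.
case/mem_dedges=> m lt_m [<- <-]; apply/mem_dedges; rewrite size_rev.
have [lt_m1 | eq_m1] : m.+1 < size s \/ m.+1 = size s by lia.
  exists (size s - m.+2); first by lia.
  rewrite !nth_rev ?(modn_small lt_m1) ?modn_small; try lia.
  by split; congr nth; lia.
exists (size s).-1; first by lia.
rewrite -eq_m1 /= modnn !nth_rev; try lia.
by split; congr nth; lia.
Qed.

Lemma mem_dedges_oface (s : seq nat) (b : bool) x y :
  (x, y) \in dedges (oface s b) -> (if b then (x, y) else (y, x)) \in dedges s.
Proof. by case: b => //= /mem_dedges_rev; rewrite revK. Qed.

Definition share_dedge (s t : seq nat) : Prop :=
  exists2 d, d \in dedges s & d \in dedges t.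

Lemma share_dedge_oface (s t : seq nat) (b : bool) :
  share_dedge s t -> has (fun d => d \in dedges (oface t b)) (dedges (oface s b)).
Proof.
case=> -[x y] xy_s xy_t; apply/hasP.
by case: b; [exists (x, y) | exists (y, x); apply: mem_dedges_rev].
Qed.

(* Faces sharing a directed edge need opposite orientations, and here they form
   the cycle 0, 1, ..., a, 0 of odd length. *)
Lemma not_orientable_faces (faces : seq (seq nat)) a :
  (forall i, i.+1 < size faces ->
     share_dedge (nth [::] faces i) (nth [::] faces i.+1)) ->
  0 < a < size faces -> ~~ odd a ->
  share_dedge (nth [::] faces 0) (nth [::] faces a) ->
  ~ orientable_faces faces.
Proof.
move=> share_next /andP[a_gt0 lt_a] even_a share_0a [e e_ok].
have e_alt i : i < size faces -> e i = odd i (+) e 0.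
  elim: i => [|i IHi] lt_i //.
  have flip : e i.+1 != e i.
    apply: contraNneq (e_ok i i.+1 (ltnW lt_i) lt_i (negbT (ltn_eqF (ltnSn i)))) => ->.
    exact/share_dedge_oface/share_next.
  by move: flip; rewrite IHi ?(ltnW lt_i) //=; case: (e i.+1) (odd i) (e 0) => [] [] [].
have /negP := e_ok 0 a (ltn_trans a_gt0 lt_a) lt_a (negbT (ltn_eqF a_gt0)).
by rewrite e_alt // (negbTE even_a); apply; apply: share_dedge_oface.
Qed.

Lemma odd_sumn_take (s : seq nat) m :
  all odd s -> m <= size s -> odd (sumn (take m s)) = odd m.
Proof.
elim: s m => [|x s IHs] [|m] //= /andP[odd_x odd_s] le_m.
by rewrite oddD odd_x IHs.
Qed.

Definition neg_prefix_sums (n : nat) (s : seq nat) : seq nat :=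
  [seq (n - sumn (take m s) %% n) %% n | m <- iota 0 (size s)].

Definition translate (n i : nat) (p : seq nat) : seq nat :=
  [seq (x + i) %% n | x <- p].

Section Translates.

Variables (n : nat) (s : seq nat).
Hypothesis sumn_s : sumn s = n.
Hypothesis n_gt0 : 0 < n.

Local Notation face i := (translate n i (neg_prefix_sums n s)).

Lemma size_face i : size (face i) = size s.
Proof. by rewrite !size_map size_iota. Qed.

Lemma nth_face i m : m < size s ->
  nth 0 (face i) m = (n - sumn (take m s) %% n + i) %% n.
Proof.
by move=> lt_m; rewrite (nth_map 0) ?(nth_map 0) ?size_map ?size_iota ?nth_iota ?modnDml.
Qed.

Lemma dedge_face i m : m < size s ->
  (nth 0 (face i) m, nth 0 (face i) (m.+1 %% size s)) \in dedges (face i).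
Proof. by move=> lt_m; apply/mem_dedges; exists m; rewrite ?size_face. Qed.

Lemma nth_face_mod i m : m <= size s ->
  nth 0 (face i) (m %% size s) + sumn (take m s) = i %[mod n].
Proof.
have s_gt0 : 0 < size s by case: s sumn_s n_gt0 => [<-|].
rewrite leq_eqVlt => /predU1P[-> | lt_m].
  by rewrite modnn take_size sumn_s nth_face // take0 mod0n subn0 modnDml modnDr modnDl.
rewrite (modn_small lt_m) nth_face // modnDml -modnDmr -addnA (addnC i) addnA.
by rewrite subnK ?modnDl // ltnW // ltn_mod.
Qed.

Lemma nth_faces i : i < n -> nth [::] [seq face j | j <- iota 0 n] i = face i.
Proof. by move=> lt_i; rewrite (nth_map 0) ?size_iota // nth_iota. Qed.

Lemma dedges_face i u v : (u, v) \in dedges (face i) ->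
  exists2 m, m < size s &
    u + sumn (take m s) = i %[mod n] /\ v + nth 0 s m = u %[mod n].
Proof.
case/mem_dedges; rewrite size_face => m lt_m [<- <-].
have u_eq := nth_face_mod i (ltnW lt_m); rewrite (modn_small lt_m) in u_eq.
exists m => //; split => //.
have := nth_face_mod i lt_m; rewrite (take_nth 0 lt_m) sumn_rcons addnCA addnC -u_eq.
by move/eqP; rewrite eqn_modDr => /eqP.
Qed.

Section OrientedByParity.

Hypothesis n_even : ~~ odd n.
Hypothesis odd_steps : all odd s.
Hypothesis steps_small :
  forall m1 m2, m1 < size s -> m2 < size s -> nth 0 s m1 + nth 0 s m2 < n.
Hypothesis steps_separated :
  forall m1 m2, m1 < size s -> m2 < size s ->
    nth 0 s m1 = nth 0 s m2 -> odd m1 = odd m2 -> m1 = m2.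

Lemma odd_modn_eq x y : x = y %[mod n] -> odd x = odd y.
Proof.
by have n_even2 := negbTE n_even; rewrite -(odd_mod x n_even2) => ->; rewrite odd_mod.
Qed.

Lemma opposite_dedges_faces i j u v :
  (u, v) \in dedges (face i) -> (v, u) \in dedges (face j) -> False.
Proof.
case/dedges_face=> m1 lt_m1 [_ vu]; case/dedges_face=> m2 lt_m2 [_ uv].
have := elimT (all_nthP 0) odd_steps m1 lt_m1 => odd_m1.
have : u + (nth 0 s m1 + nth 0 s m2) = u + 0 %[mod n].
  by rewrite (addnC (nth 0 s m1)) addnA -modnDml uv modnDml vu addn0.
move/eqP; rewrite eqn_modDl mod0n modn_small ?steps_small //.
by case: (nth 0 s m1) odd_m1.
Qed.

Lemma same_dedge_faces i j u v : i < n -> j < n ->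
  (u, v) \in dedges (face i) -> (u, v) \in dedges (face j) -> odd i = odd j -> i = j.
Proof.
move=> lt_i lt_j; case/dedges_face=> m1 lt_m1 [ui vu1].
case/dedges_face=> m2 lt_m2 [uj vu2] odd_ij.
have same_step : nth 0 s m1 = nth 0 s m2.
  have lt_sum := steps_small lt_m1 lt_m2.
  have : nth 0 s m1 = nth 0 s m2 %[mod n].
    by apply/eqP; rewrite -(eqn_modDl v) vu1 vu2.
  by rewrite !modn_small // (leq_ltn_trans _ lt_sum) ?leq_addr ?leq_addl.
have same_parity : odd m1 = odd m2.
  have := odd_modn_eq ui; have := odd_modn_eq uj.
  rewrite !oddD !odd_sumn_take ?(ltnW lt_m1) ?(ltnW lt_m2) // odd_ij => <-.
  by case: (odd u) (odd m1) (odd m2) => [] [] [].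
have eq_m := steps_separated lt_m1 lt_m2 same_step same_parity.
by rewrite -[i](modn_small lt_i) -[j](modn_small lt_j) -ui -uj eq_m.
Qed.

Theorem orientable_translates : orientable_faces [seq face i | i <- iota 0 n].
Proof.
exists odd => i j; rewrite size_map size_iota => lt_i lt_j neq_ij.
rewrite !nth_faces //.
apply/hasP => -[[u v] /mem_dedges_oface uv_i /mem_dedges_oface uv_j].
case odd_i: (odd i) uv_i; case odd_j: (odd j) uv_j => uv_j uv_i.
- by case/eqP: neq_ij; apply: (same_dedge_faces lt_i lt_j uv_i uv_j); rewrite odd_i odd_j.
- exact: opposite_dedges_faces uv_i uv_j.
- exact: opposite_dedges_faces uv_i uv_j.
- by case/eqP: neq_ij; apply: (same_dedge_faces lt_i lt_j uv_i uv_j); rewrite odd_i odd_j.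
Qed.

End OrientedByParity.

End Translates.

Definition stutter (s : seq nat) : seq nat := flatten [seq [:: x; x] | x <- s].

Lemma stutter_cat (s t : seq nat) : stutter (s ++ t) = stutter s ++ stutter t.
Proof. by rewrite /stutter map_cat flatten_cat. Qed.

Lemma size_stutter (s : seq nat) : size (stutter s) = (size s).*2.
Proof. by elim: s => //= x s ->. Qed.

Lemma sumn_stutter (s : seq nat) : sumn (stutter s) = (sumn s).*2.
Proof. by elim: s => //= x s ->; rewrite doubleD addnA addnn. Qed.

Lemma nth_stutter (s : seq nat) m : nth 0 (stutter s) m = nth 0 s m./2.
Proof. by elim: s m => [|x s IHs] [|[|m]] //=; rewrite ?nth_nil. Qed.

(* The last two steps lead from w_(2k-2) = 2 back to 0 through 1. *)
Definition Dcycle (k r : nat) : seq nat := Dsteps k r ++ [:: 1; 1].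

Definition Dstep (k r q : nat) : nat :=
  if q == 0 then 3 ^ k.-1 + r else 3 ^ (k.-1 - q).

Section Dmap.

Variables k r : nat.
Hypothesis k_ge3 : 3 <= k.

Local Notation n := (Dn k r).
Local Notation a := (3 ^ k.-1 + r).

Lemma Dsteps_stutter : Dsteps k r = stutter [seq Dstep k r q | q <- iota 0 k.-1].
Proof.
have -> : k.-1 = (k - 2).+1 by lia.
rewrite /Dsteps /stutter /= (iotaDl 1 1) -!map_comp; congr [:: _, _ & flatten _].
apply/eq_in_map => q; rewrite mem_iota => /andP[q_gt0 _] /=.
by rewrite /Dstep (gtn_eqF q_gt0) add1n subnS -subn1 subnAC subn1.
Qed.

Lemma Dcycle_stutter : Dcycle k r = stutter [seq Dstep k r q | q <- iota 0 k].
Proof.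
have -> : iota 0 k = iota 0 k.-1 ++ [:: k.-1].
  by rewrite -[X in iota 0 X](@prednK k) ?(leq_trans _ k_ge3) // -addn1 iotaD.
by rewrite map_cat stutter_cat -Dsteps_stutter /= /Dstep ifN_eq ?subnn //; lia.
Qed.

Lemma size_Dsteps : size (Dsteps k r) = k.*2 - 2.
Proof. by rewrite Dsteps_stutter size_stutter size_map size_iota; lia. Qed.

Lemma size_Dcycle : size (Dcycle k r) = k.*2.
Proof. by rewrite Dcycle_stutter size_stutter size_map size_iota. Qed.

Lemma nth_Dcycle m : m < k.*2 -> nth 0 (Dcycle k r) m = Dstep k r m./2.
Proof.
move=> lt_m; have lt_half : m./2 < k by lia.
by rewrite Dcycle_stutter nth_stutter (nth_map 0) ?size_iota ?nth_iota.
Qed.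

Lemma Dstep_prefix_sum p : 0 < p <= k ->
  (sumn [seq Dstep k r q | q <- iota 0 p]).*2 + 3 ^ (k - p) = a.*2 + 3 ^ k.-1.
Proof.
elim: p => [//|p IHp] /andP[_ le_pk].
rewrite -addn1 iotaD map_cat sumn_cat /= addn0 addn1.
have [-> | p_gt0] := posnP p; first by rewrite /Dstep /= subn1.
rewrite -IHp ?p_gt0 ?(ltnW le_pk) // /Dstep (gtn_eqF p_gt0).
have -> : k - p = (k.-1 - p).+1 by lia.
have -> : k - p.+1 = k.-1 - p by lia.
by rewrite expnS add0n; lia.
Qed.

Lemma Dn_pow3 : n = 3 * 3 ^ k.-1 - 1 + r.*2.
Proof. by rewrite /Dn -expnS prednK ?mul2n //; lia. Qed.

Lemma pow3_ge3 : 3 <= 3 ^ k.-1.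
Proof. by rewrite -{1}(expn1 3) leq_exp2l //; lia. Qed.

Lemma double_Dstep0_lt : a.*2 < n.
Proof. by rewrite Dn_pow3; have := pow3_ge3; lia. Qed.

Lemma Dn_even : ~~ odd n.
Proof. by rewrite /Dn oddD oddB ?expn_gt0 // oddX mul2n odd_double orbT. Qed.

Lemma sumn_Dsteps : sumn (Dsteps k r) = n - 2.
Proof.
have := @Dstep_prefix_sum k.-1; rewrite Dsteps_stutter sumn_stutter Dn_pow3.
have -> : k - k.-1 = 1 by lia.
by rewrite expn1; have := pow3_ge3; lia.
Qed.

Lemma sumn_Dcycle : sumn (Dcycle k r) = n.
Proof. by rewrite sumn_cat sumn_Dsteps /=; have := double_Dstep0_lt; lia. Qed.

Lemma Dstep_le q : Dstep k r q <= a.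
Proof.
rewrite /Dstep; case: eqP => // _.
by rewrite (leq_trans _ (leq_addr r _)) // leq_exp2l // leq_subr.
Qed.

Lemma odd_Dstep q : ~~ odd r -> odd (Dstep k r q).
Proof.
move=> even_r; rewrite /Dstep.
by case: eqP => _; rewrite ?oddD oddX orbT ?(negbTE even_r).
Qed.

Lemma Dstep_inj q1 q2 : q1 < k -> q2 < k -> Dstep k r q1 = Dstep k r q2 -> q1 = q2.
Proof.
have Dstep_lt q : 0 < q -> Dstep k r q < a.
  move=> q_gt0; rewrite /Dstep (gtn_eqF q_gt0).
  by rewrite (leq_trans _ (leq_addr r _)) // ltn_exp2l //; lia.
move=> lt_q1 lt_q2; have [-> | q1_gt0] := posnP q1; have [-> | q2_gt0] := posnP q2 => //.
- by move=> eq_a; move: (Dstep_lt q2 q2_gt0); rewrite -eq_a /Dstep eqxx ltnn.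
- by move=> eq_a; move: (Dstep_lt q1 q1_gt0); rewrite eq_a /Dstep eqxx ltnn.
rewrite /Dstep (gtn_eqF q1_gt0) (gtn_eqF q2_gt0) => /eqP; rewrite eqn_exp2l //.
by move/eqP; lia.
Qed.

Lemma sumn_take_Dcycle_tail :
  sumn (take (k.*2 - 2) (Dcycle k r)) = n - 2 /\
  sumn (take (k.*2 - 1) (Dcycle k r)) = n - 1.
Proof.
rewrite /Dcycle take_size_cat ?size_Dsteps // take_cat size_Dsteps ifN; last by lia.
have -> : k.*2 - 1 - (k.*2 - 2) = 1 by lia.
by rewrite sumn_cat sumn_Dsteps /=; have := double_Dstep0_lt; lia.
Qed.

Lemma Dbase_neg_prefix_sums : Dbase k r = neg_prefix_sums n (Dcycle k r).
Proof.
have [tail2 tail1] := sumn_take_Dcycle_tail; have n_gt := double_Dstep0_lt.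
rewrite /neg_prefix_sums size_Dcycle.
set f := fun m => _.
have -> : k.*2 = 1 + (2 * k - 3) + 2 by lia.
rewrite !iotaD !map_cat -catA !add0n /Dbase; congr (_ ++ _ ++ _).
- by rewrite /f /= mod0n subn0 modnn.
- apply/eq_in_map => j; rewrite mem_iota => /andP[_ lt_j].
  by rewrite /f /Dw /Dcycle take_cat size_Dsteps ifT //; lia.
have -> : 1 + (2 * k - 3) = k.*2 - 2 by lia.
have -> : iota (k.*2 - 2) 2 = [:: k.*2 - 2; k.*2 - 1] by rewrite /=; congr [:: _; _]; lia.
by rewrite /= /f tail2 tail1 !modn_small; do ?congr [:: _; _]; lia.
Qed.

Lemma Dfaces_translates :
  Dfaces k r = [seq translate n i (neg_prefix_sums n (Dcycle k r)) | i <- iota 0 n].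
Proof. by rewrite /Dfaces /Dface Dbase_neg_prefix_sums. Qed.

Local Notation face i := (translate n i (neg_prefix_sums n (Dcycle k r))).

Lemma Dface_share_next i : share_dedge (face i) (face i.+1).
Proof.
have [tail2 tail1] := sumn_take_Dcycle_tail; have n_gt := double_Dstep0_lt.
have lt2 : k.*2 - 2 < size (Dcycle k r) by rewrite size_Dcycle; lia.
have lt1 : k.*2 - 1 < size (Dcycle k r) by rewrite size_Dcycle; lia.
have lt0 : 0 < size (Dcycle k r) by rewrite size_Dcycle; lia.
have n_sub2 : n - (n - 2) %% n = 2 by rewrite modn_small; lia.
have n_sub1 : n - (n - 1) %% n = 1 by rewrite modn_small; lia.
exists ((2 + i) %% n, (1 + i) %% n).
  have := dedge_face n i lt2; rewrite size_Dcycle.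
  have -> : (k.*2 - 2).+1 %% k.*2 = k.*2 - 1 by rewrite modn_small; lia.
  by rewrite !nth_face // tail2 tail1 n_sub2 n_sub1.
have := dedge_face n i.+1 lt1; rewrite size_Dcycle.
have -> : (k.*2 - 1).+1 %% k.*2 = 0 by rewrite -subSn ?subn1 ?modnn; lia.
by rewrite !nth_face // tail1 n_sub1 take0 mod0n subn0 modnDl add1n.
Qed.

Lemma Dface_share_step0 : share_dedge (face 0) (face a).
Proof.
have n_gt := double_Dstep0_lt.
have head1 : sumn (take 1 (Dcycle k r)) = a by rewrite /Dcycle /Dsteps /= addn0.
have head2 : sumn (take 2 (Dcycle k r)) = a.*2.
  by rewrite /Dcycle /Dsteps /= take0 addn0 addnn.
have lt0 : 0 < size (Dcycle k r) by rewrite size_Dcycle; lia.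
have lt1 : 1 < size (Dcycle k r) by rewrite size_Dcycle; lia.
exists (0, n - a).
  have := dedge_face n 0 lt0; rewrite size_Dcycle modn_small; last by lia.
  rewrite !nth_face // head1 take0 mod0n subn0 !addn0 modnn.
  by rewrite (modn_small (_ : a < n)) ?modn_small //; lia.
have := dedge_face n a lt1; rewrite size_Dcycle modn_small; last by lia.
have lt2 : 2 < size (Dcycle k r) by rewrite size_Dcycle; lia.
rewrite !nth_face // head1 head2 (modn_small (_ : a < n)) ?(modn_small n_gt); last by lia.
have -> : n - a + a = n by lia.
have -> : n - a.*2 + a = n - a by lia.
by rewrite modnn modn_small //; lia.
Qed.

Lemma Dfaces_orientable : ~~ odd r -> orientable_faces (Dfaces k r).
Proof.
move=> even_r; rewrite Dfaces_translates.
have n_gt := double_Dstep0_lt.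
apply: orientable_translates; rewrite ?size_Dcycle.
- exact: sumn_Dcycle.
- by lia.
- exact: Dn_even.
- by apply/(all_nthP 0) => m; rewrite size_Dcycle => lt_m; rewrite nth_Dcycle ?odd_Dstep.
- move=> m1 m2 lt_m1 lt_m2; rewrite !nth_Dcycle //.
  by have := Dstep_le m1./2; have := Dstep_le m2./2; lia.
move=> m1 m2 lt_m1 lt_m2; rewrite !nth_Dcycle // => /Dstep_inj eq_half same_parity.
by rewrite -[m1]odd_double_half -[m2]odd_double_half same_parity eq_half //; lia.
Qed.

Lemma Dfaces_not_orientable : odd r -> ~ orientable_faces (Dfaces k r).
Proof.
move=> odd_r; rewrite Dfaces_translates.
have a_lt : a < n by have := double_Dstep0_lt; lia.
have n_gt0 : 0 < n by lia.
apply: (@not_orientable_faces _ a); rewrite ?size_map ?size_iota.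
- by move=> i lt_i; rewrite !nth_faces ?(ltnW lt_i) //; apply: Dface_share_next.
- by rewrite a_lt andbT addn_gt0 expn_gt0.
- by rewrite oddD oddX orbT odd_r.
by rewrite !nth_faces //; apply: Dface_share_step0.
Qed.

End Dmap.

Theorem mainTheorem17 (k r : nat) (hk : 3 <= k) :
  (~~ odd r -> D_orientable k r) /\ (odd r -> ~ D_orientable k r).
Proof. by split; [apply: Dfaces_orientable | apply: Dfaces_not_orientable]. Qed.
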